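(* Let $n\geq 3$ and $\ell\geq 2$, and consider the generalized $n$-cycle scenario whose measurements each have outcome set $O$ with $|O|=\ell$. A nondisturbing behavior for it is logically contextual if and only if there exist an index $\mu\in\{1,\dots,n\}$, a pair $(a,b)\in O^2$ with $\bar p_\mu(a,b)=1$, and, for each $\nu=1,\dots,n-2$, an enumeration $(\alpha_\nu^1,\dots,\alpha_\nu^\ell)$ of $O$ with pairwise distinct entries and an integer $0\leq m_\nu\leq\ell$, such that all of the following equal $0$: $\bar p_{\mu+1}(b,\alpha_1^i)$ for $1\le i\le m_1$; $\bar p_{\mu+\nu+1}(\alpha_\nu^i,\alpha_{\nu+1}^j)$ for $1\le\nu\le n-3$, $m_\nu< i\le\ell$, $1\le j\le m_{\nu+1}$; $\bar p_{\mu+n-1}(\alpha_{n-2}^i,a)$ for $m_{n-2}<i\le\ell$. (Indices of $\bar p$ are taken modulo $n$.)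
   Context: The generalized $n$-cycle scenario has measurements $M_1,\dots,M_n$, each with finite outcome set $O$, and contexts $\{M_i,M_{i+1}\}$, indices mod $n$. A behavior is a family of probability distributions $p_i$ on $O^2$, $p_i(x,y)$ being the probability that $M_i=x$ and $M_{i+1}=y$; it is nondisturbing if for all $i$ and $x$, $\sum_y p_i(y,x)=\sum_y p_{i+1}(x,y)$. Set $\bar p_i(x,y)=1$ if $p_i(x,y)>0$ and $0$ otherwise. The behavior is logically noncontextual if there exists $\bar p:O^n\to\{0,1\}$ with $\max\{\bar p(t):t_i=x,\ t_{i+1}=y\}=\bar p_i(x,y)$ for all $i,x,y$; otherwise logically contextual. *)

From HB Require Import structures.
From mathcomp Require Import all_boot all_order all_algebra.
Set Implicit Arguments. Unset Strict Implicit. Unset Printing Implicit Defensive.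
Import Order.TTheory GRing.Theory Num.Theory.
Local Open Scope ring_scope.

(* Generalized n-cycle scenario: measurements indexed by 'Z_n (n >= 3, so
   'Z_n has exactly n elements), contexts {M_i, M_(i+1)}; a behavior is
   p : 'Z_n -> O -> O -> R, p i x y = Prob(M_i = x, M_(i+1) = y). *)

Definition is_behavior (n : nat) (O : finType) (R : realFieldType)
  (p : 'Z_n -> O -> O -> R) : Prop :=
  forall i : 'Z_n, (forall x y, 0 <= p i x y) /\ \sum_(x : O) \sum_(y : O) p i x y = 1.

Definition nondisturbing (n : nat) (O : finType) (R : realFieldType)
  (p : 'Z_n -> O -> O -> R) : Prop :=
  forall (i : 'Z_n) (x : O), \sum_(y : O) p i y x = \sum_(y : O) p (i + 1) x y.

Definition pbar (n : nat) (O : finType) (R : realFieldType)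
  (p : 'Z_n -> O -> O -> R) (i : 'Z_n) (x y : O) : bool := 0 < p i x y.

Definition logically_noncontextual (n : nat) (O : finType) (R : realFieldType)
  (p : 'Z_n -> O -> O -> R) : Prop :=
  exists pb : {ffun 'Z_n -> O} -> bool,
    forall (i : 'Z_n) (x y : O),
      \max_(t : {ffun 'Z_n -> O} | (t i == x) && (t (i + 1)%R == y)) nat_of_bool (pb t)
      = nat_of_bool (pbar p i x y).

Definition logically_contextual (n : nat) (O : finType) (R : realFieldType)
  (p : 'Z_n -> O -> O -> R) : Prop := ~ logically_noncontextual p.

From HB Require Import structures.
From mathcomp Require Import all_boot all_order all_algebra.
From Stdlib Require Import Classical.
Set Implicit Arguments. Unset Strict Implicit. Unset Printing Implicit Defensive.
Import Order.TTheory GRing.Theory Num.Theory.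
Local Open Scope ring_scope.

(* A behaviour is logically noncontextual exactly when every pair in the
   support of a context extends to a global assignment t : 'Z_n -> O all of
   whose adjacent pairs are supported.  Fix a supported pair (a, b) in context
   mu and let R_k be the set of values at position mu + 1 + k reachable from b
   along supported pairs: (a, b) extends iff some element of R_(n-2) is
   followed by a in the context closing the cycle.  The R_k form the least
   family containing b and closed under supported pairs, so (a, b) fails to
   extend iff some closed family V_1, ..., V_(n-2) never leads to a.
   Enumerating the complement of V_nu first, as alpha_nu^1, ..., alpha_nu^m_nu,
   turns these closure conditions into the vanishing conditions of the
   statement.  Only the supports of p matter. *)

Lemma bigmax_bool (T : finType) (P b : pred T) :
  (\max_(t | P t) nat_of_bool (b t))%N = [exists t, P t && b t].
Proof.
case: existsP => [[t /andP [Pt bt]] | none].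
- apply/eqP; rewrite eqn_leq; apply/andP; split.
  + by apply/bigmax_leqP => u _; case: (b u).
  + by have := @leq_bigmax_cond _ P (fun u => nat_of_bool (b u)) t Pt; rewrite bt.
- apply: big1 => t Pt; case bt: (b t) => //.
  by case: none; exists t; rewrite Pt bt.
Qed.

Section GlobalSections.

Variables (n : nat) (O : finType) (s : 'Z_n -> rel O).

Definition global_section (t : {ffun 'Z_n -> O}) : bool :=
  [forall i, s i (t i) (t (i + 1))].

Definition extendable (i : 'Z_n) (x y : O) : Prop :=
  exists2 t : {ffun 'Z_n -> O}, global_section t & (t i == x) && (t (i + 1) == y).

Fixpoint reach (i : 'Z_n) (b : O) (k : nat) : {set O} :=
  if k is k'.+1 then [set y | [exists x in reach i b k', s (i + k'%:R) x y]]
  else [set b].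

Lemma reach_path i b k x : x \in reach i b k ->
  exists f : nat -> O,
    [/\ f 0%N = b, f k = x & forall j, (j < k)%N -> s (i + j%:R) (f j) (f j.+1)].
Proof.
elim: k x => [|k IH] x /=; first by rewrite inE => /eqP ->; exists (fun=> b).
rewrite inE => /exists_inP [y /IH [f [f0 fk fS]] syx].
exists (fun j => if (j <= k)%N then f j else x); split=> [|| j]; rewrite ?ltnn //.
rewrite ltnS => lejk; case: ltngtP => [ltjk | ltkj | ->]; first exact: fS.
- by rewrite ltnNge lejk in ltkj.
- by rewrite fk.
Qed.

Lemma section_reach (t : {ffun 'Z_n -> O}) i k :
  global_section t -> t (i + k%:R) \in reach i (t i) k.
Proof.
move=> /forallP tS; elim: k => [|k IH]; first by rewrite addr0 inE.
by rewrite inE; apply/exists_inP; exists (t (i + k%:R)); rewrite // -natr1 addrA.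
Qed.

Definition separates (i : 'Z_n) (b a : O) (k : nat) (V : nat -> {set O}) :=
  [/\ b \in V 0%N,
      forall j, (j < k)%N -> forall x y, x \in V j -> s (i + j%:R) x y -> y \in V j.+1
    & forall x, x \in V k -> ~~ s (i + k%:R) x a].

Lemma reach_sub_closed i b k (V : nat -> {set O}) :
  b \in V 0%N ->
  (forall j, (j < k)%N -> forall x y, x \in V j -> s (i + j%:R) x y -> y \in V j.+1) ->
  forall j, (j <= k)%N -> reach i b j \subset V j.
Proof.
move=> bV closedV; elim=> [|j IH] lejk /=; first by rewrite sub1set.
apply/subsetP => y; rewrite inE => /exists_inP [x xR sxy].
exact: closedV lejk x y (subsetP (IH (ltnW lejk)) x xR) sxy.
Qed.

Lemma separates_reach_avoid i b a k V : separates i b a k V ->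
  forall x, x \in reach i b k -> ~~ s (i + k%:R) x a.
Proof.
case=> bV closedV avoidV x xR.
exact/avoidV/(subsetP (reach_sub_closed bV closedV (leqnn k))).
Qed.

Lemma reach_separates i b a k :
  (forall x, x \in reach i b k -> ~~ s (i + k%:R) x a) ->
  separates i b a k (reach i b).
Proof.
split=> [|j _ x y xR sxy|//]; first exact: set11.
by rewrite inE; apply/exists_inP; exists x.
Qed.

End GlobalSections.

Lemma noncontextualP (n : nat) (O : finType) (R : realFieldType)
    (p : 'Z_n -> O -> O -> R) :
  logically_noncontextual p <->
  (forall i x y, pbar p i x y -> extendable (pbar p) i x y).
Proof.
rewrite /logically_noncontextual; split=> [[pb pbE] i x y sxy | ext].
- have /existsP [t /andP [/andP [/eqP ti /eqP ti1] pbt]] :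
      [exists t : {ffun 'Z_n -> O}, ((t i == x) && (t (i + 1) == y)) && pb t].
    by move: (pbE i x y); rewrite bigmax_bool sxy; case: [exists _, _].
  exists t; last by rewrite ti ti1 !eqxx.
  apply/forallP => j; move: (pbE j (t j) (t (j + 1))); rewrite bigmax_bool.
  by case: existsP => [_ | -[]]; [case: pbar | exists t; rewrite !eqxx].
- exists (global_section (pbar p)) => i x y; rewrite bigmax_bool.
  case sxy: (pbar p i x y).
  + have [t tS txy] := ext i x y sxy.
    by case: existsP => // -[]; exists t; rewrite txy.
  + case: existsP => // [[t /andP [/andP [/eqP ti /eqP ti1] /forallP /(_ i)]]].
    by rewrite ti ti1 sxy.
Qed.

Section Cycle.

Variables (N : nat) (O : finType) (s : 'Z_N.+2 -> rel O).

Lemma global_section_of_cycle (i : 'Z_N.+2) (g : nat -> O) :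
  (forall k, (k <= N.+1)%N -> s (i + k%:R) (g k) (g (k.+1 %% N.+2)%N)) ->
  exists2 t, global_section s t & forall k, t (i + k%:R) = g (k %% N.+2)%N.
Proof.
move=> gS; pose t := [ffun j => g (j - i)].
have tE k : t (i + k%:R) = g (k %% N.+2)%N.
  by rewrite ffunE (addrC i) addrK val_Zp_nat.
exists t => //; apply/forallP => j.
have [k ltkN ->] : exists2 k, (k < N.+2)%N & j = i + k%:R.
  by exists (j - i); rewrite ?natr_Zp ?(addrC i) ?subrK.
by rewrite -addrA natr1 !tE modn_small //; apply: gS.
Qed.

Lemma extendableP (mu : 'Z_N.+2) (a b : O) : s mu a b ->
  extendable s mu a b <->
  exists2 x, x \in reach s (mu + 1) b N & s (mu + 1 + N%:R) x a.
Proof.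
move=> sab; split=> [[t tS /andP [/eqP ta /eqP tb]] | [x xR sxa]].
- exists (t (mu + 1 + N%:R)); first by rewrite -tb section_reach.
  have -> : a = t (mu + 1 + N%:R + 1) by rewrite -!addrA natr1 nat1r pchar_Zp ?addr0.
  by move/forallP: tS.
- have [f [f0 fN fS]] := reach_path xR.
  pose g k := if k is k'.+1 then f k' else a.
  have [|t tS tE] := @global_section_of_cycle mu g.
    case=> [_ | k /[1!ltnS] lekN]; first by rewrite modn_small //= addr0 f0.
    case: ltngtP lekN => // [ltkN _ | -> _]; last by rewrite modnn /= fN -nat1r addrA.
    by rewrite modn_small //= -nat1r addrA; apply: fS.
  exists t => //; move: (tE 0%N) (tE 1%N); rewrite addr0 mulr1n !modn_small //=.
  by move=> -> ->; rewrite f0 !eqxx.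
Qed.

End Cycle.

Section Enumerations.

Variables (O : finType) (l : nat).
Hypothesis cardO : #|O| = l.

Lemma injective_ord_onto (f : 'I_l -> O) : injective f -> forall y, exists i, f i = y.
Proof.
move=> f_inj y; have /codomP [i ->] : y \in codom f.
  by apply: inj_card_onto; rewrite // card_ord cardO.
by exists i.
Qed.

Definition compl_first (A : {set O}) : seq O := enum (~: A) ++ enum A.

Lemma size_compl_first A : size (compl_first A) = l.
Proof. by rewrite size_cat -!cardE addnC -cardO -(cardsC A). Qed.

Lemma compl_first_uniq A : uniq (compl_first A).
Proof.
rewrite cat_uniq !enum_uniq andbT /=.
by apply/hasPn => x; rewrite !mem_enum in_setC negbK.
Qed.

Lemma mem_nth_compl_first x0 A i : (i < l)%N ->
  (nth x0 (compl_first A) i \in A) = (#|~: A| <= i)%N.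
Proof.
move=> ltil; rewrite nth_cat -cardE; case: ltnP => [ltiC | leCi].
  by apply/negbTE; rewrite -in_setC -(mem_enum (mem (~: A))) mem_nth -?cardE.
rewrite -(mem_enum (mem A)) mem_nth // -cardE ltn_subLR //.
by move: ltil; rewrite -cardO -(cardsC A) addnC.
Qed.

Definition enum_compl_first x0 A (i : 'I_l) : O := nth x0 (compl_first A) i.

Lemma enum_compl_first_inj x0 A : injective (enum_compl_first x0 A).
Proof.
move=> i j /eqP; rewrite nth_uniq ?size_compl_first ?compl_first_uniq //.
by move/eqP/val_inj.
Qed.

End Enumerations.

Section EnumerationWitness.

Variables (N l : nat) (O : finType) (s : 'Z_N.+3 -> rel O) (mu : 'Z_N.+3) (a b : O).
Hypothesis cardO : #|O| = l.

Definition enumeration_witness (alpha : nat -> 'I_l -> O) (m : nat -> nat) : Prop :=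
  (forall nu : nat, (1 <= nu <= N.+1)%N -> injective (alpha nu) /\ (m nu <= l)%N) /\
  (forall i : 'I_l, (i.+1 <= m 1%N)%N -> ~~ s (mu + 1) b (alpha 1%N i)) /\
  (forall nu : nat, (1 <= nu <= N)%N ->
     forall i j : 'I_l, (m nu < i.+1)%N -> (j.+1 <= m nu.+1)%N ->
       ~~ s (mu + nu%:R + 1) (alpha nu i) (alpha nu.+1 j)) /\
  (forall i : 'I_l, (m N.+1 < i.+1)%N -> ~~ s (mu + N.+2%:R) (alpha N.+1 i) a).

Lemma witness_of_separates V :
  separates s (mu + 1) b a N.+1 V -> exists alpha m, enumeration_witness alpha m.
Proof.
case=> bV closedV avoidV.
pose alpha nu := @enum_compl_first O l b (V nu); pose m nu := #|~: V nu|.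
have alphaE nu (i : 'I_l) : (alpha nu i \in V nu) = (m nu <= i)%N.
  exact: (mem_nth_compl_first cardO b (V nu) (ltn_ord i)).
exists alpha, m; split; [|split; [|split]].
- move=> nu _; split; first exact: enum_compl_first_inj.
  by rewrite /m -cardO max_card.
- move=> i ltim; apply/negP => sbi.
  have := closedV 0%N isT b (alpha 1%N i) bV; rewrite addr0 alphaE => /(_ sbi).
  by rewrite leqNgt ltim.
- move=> nu /andP [_ le_nuN] i j leim ltjm; apply/negP; rewrite addrAC => sij.
  have := closedV nu le_nuN (alpha nu i) (alpha nu.+1 j); rewrite !alphaE => /(_ leim sij).
  by rewrite leqNgt ltjm.
- by move=> i leim; rewrite -nat1r addrA; apply: avoidV; rewrite alphaE.
Qed.

Lemma separates_of_witness alpha m :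
  enumeration_witness alpha m -> exists V, separates s (mu + 1) b a N.+1 V.
Proof.
case=> alpha_inj [avoid_first [avoid_step avoid_last]].
pose V nu :=
  if nu is 0 then [set b] else [set alpha nu i | i in [set i : 'I_l | m nu <= i]%N].
have tailP nu x : (0 < nu)%N ->
    reflect (exists2 i : 'I_l, (m nu <= i)%N & x = alpha nu i) (x \in V nu).
  case: nu => // nu _; apply: (iffP imsetP) => -[i];
  by rewrite ?inE => lei ->; exists i; rewrite ?inE.
exists V; split=> [|j ltjN x y xV sxy|x /tailP [//|i lei ->]]; first exact: set11.
- have [i yE] := injective_ord_onto cardO (alpha_inj j.+1 ltjN).1 y; subst y.
  apply/tailP => //; exists i => //; rewrite leqNgt; apply/negP.
  move: ltjN xV sxy; case: j => [|j] ltjN.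
  + by rewrite inE addr0 => /eqP -> sbi /avoid_first; rewrite sbi.
  + move=> /tailP [//|i0 lei0 ->]; rewrite -addrAC => sxy.
    by move=> /(avoid_step j.+1 ltjN i0 i lei0); rewrite sxy.
- by rewrite -addrA nat1r; apply: avoid_last.
Qed.

Lemma not_extendableP : s mu a b ->
  ~ extendable s mu a b <-> exists alpha m, enumeration_witness alpha m.
Proof.
move=> sab; split=> [not_ext | [alpha [m /separates_of_witness [V sepV]]] ext].
- apply/witness_of_separates/reach_separates => x xR.
  by apply/negP => sxa; apply: not_ext; apply/(extendableP sab); exists x.
- have [x xR] := (extendableP sab).1 ext.
  by apply/negP; apply: separates_reach_avoid sepV x xR.
Qed.

End EnumerationWitness.

Theorem theorem4 (n l : nat) (O : finType) (R : realFieldType)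
  (p : 'Z_n -> O -> O -> R) :
  (3 <= n)%N -> (2 <= l)%N -> #|O| = l ->
  is_behavior p -> nondisturbing p ->
  (logically_contextual p <->
   exists (mu : 'Z_n) (a b : O) (alpha : nat -> 'I_l -> O) (m : nat -> nat),
     pbar p mu a b /\
     (forall nu : nat, (1 <= nu <= n - 2)%N -> injective (alpha nu) /\ (m nu <= l)%N) /\
     (forall i : 'I_l, (i.+1 <= m 1%N)%N -> ~~ pbar p (mu + 1) b (alpha 1%N i)) /\
     (forall nu : nat, (1 <= nu <= n - 3)%N ->
        forall i j : 'I_l, (m nu < i.+1)%N -> (j.+1 <= m nu.+1)%N ->
          ~~ pbar p (mu + nu%:R + 1) (alpha nu i) (alpha nu.+1 j)) /\
     (forall i : 'I_l, (m (n - 2)%N < i.+1)%N ->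
          ~~ pbar p (mu + (n - 1)%N%:R) (alpha (n - 2)%N i) a)).
Proof.
case: n p => [|[|[|N]]] // p _ _ cardO _ _.
have -> : (N.+3 - 1 = N.+2)%N by [].
have -> : (N.+3 - 2 = N.+1)%N by [].
have -> : (N.+3 - 3 = N)%N by rewrite !subSS subn0.
rewrite /logically_contextual noncontextualP.
split=> [not_ext | [mu [a [b [alpha [m [sab witness]]]]]] ext].
- have [mu [a [b [sab nab]]]] :
      exists mu a b, pbar p mu a b /\ ~ extendable (pbar p) mu a b.
    apply: NNPP => none; apply: not_ext => mu a b sab; apply: NNPP => nab.
    by apply: none; exists mu, a, b.
  have [alpha [m witness]] := (not_extendableP cardO sab).1 nab.
  by exists mu, a, b, alpha, m.
- by apply: (not_extendableP cardO sab).2 (ext mu a b sab); exists alpha, m.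
Qed.
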